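(* Let $Y$ be a $\mathbb{Q}$-vector space, let $f:\mathbb{R}\to Y$, let $s\ge 1$ and $\delta>0$, and let $I=(-\delta,0)$. If $\Delta_h^sf(x)=0$ for all $x\in\mathbb{R}$ and all $h\in I$, then $\Delta_{h_1h_2\cdots h_s}f(x)=0$ for all $(x,h_1,\dots,h_s)\in\mathbb{R}^{s+1}$. The same conclusion holds if instead the hypothesis is assumed for all $h\in(0,\delta)$.
   Context: For $f:X\to Y$ between $\mathbb{Q}$-vector spaces and $h\in X$, $\Delta_hf(x)=f(x+h)-f(x)$; iterated differences are $\Delta_{h_1h_2\cdots h_s}f(x)=\Delta_{h_1}\left(\Delta_{h_2\cdots h_s}f\right)(x)$; and $\Delta_h^sf(x)=\sum_{k=0}^s\binom{s}{k}(-1)^{s-k}f(x+kh)$ (i.e. $\Delta_{h_1\cdots h_s}f(x)$ with $h_1=\cdots=h_s=h$). *)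

From Stdlib Require Import Reals.
From HB Require Import structures.
From mathcomp Require Import all_boot all_order all_algebra.

Set Implicit Arguments.
Unset Strict Implicit.
Unset Printing Implicit Defensive.

Import GRing.Theory.

Definition Delta (Y : lmodType rat) (h : R) (f : R -> Y) : R -> Y :=
  fun x => (f (Rplus x h) - f x)%R.

Definition Delta_seq (Y : lmodType rat) (hs : seq R) (f : R -> Y) : R -> Y :=
  foldr (@Delta Y) f hs.

Definition DeltaPow (Y : lmodType rat) (s : nat) (h : R) (f : R -> Y) (x : R) : Y :=
  (\sum_(k < s.+1) (((-1) ^+ (s - k)) *: f (Rplus x (Rmult (INR k) h))) *+ 'C(s, k))%R.

From Pilot Require Import Defs.
From Stdlib Require Import Reals Lra.
From HB Require Import structures.
From mathcomp Require Import all_boot all_order all_algebra.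
Import GRing.Theory.

(* It suffices to treat the forward interval (0, delta): the
   backward case follows by applying it to the mirrored function x |-> f (-x),
   which turns steps h into -h.  Assume Delta_h^s f = 0 for 0 < h < delta.
   1. Mixed differences: for pairs (p_i, q_i) put
        M(x, b) = sum_j (-1)^(s-j) C(s,j) Delta_{p_1 + j q_1, ..., p_m + j q_m} f (x + j b).
      With no pair, M is Delta_b^s f; removing the first pair writes M as a
      difference of two mixed differences with b shifted by q_1.  Hence M = 0
      as long as 0 < b and the q_i are small and nonnegative.
   2. Choosing q_i = -h_i / (i+1) makes the j = i+1 step vanish, so that only
      the j = 0 term survives: Delta_{h_1 ... h_s} f = 0 whenever every h_i
      lies in [-eta, 0] for a small eta > 0.
   3. For fixed other steps, the steps h for which the iterated difference
      vanishes form an additive subgroup of R; a subgroup containing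
      [-eta, 0] is all of R, so the steps are released one slot at a time. *)

Set Implicit Arguments.
Unset Strict Implicit.

Local Open Scope R_scope.

Lemma subgroup_cover (P : R -> Prop) (eta : R) :
  0 < eta ->
  (forall a b, P a -> P b -> P (a + b)) ->
  (forall a, P a -> P (- a)) ->
  (forall h, - eta <= h <= 0 -> P h) ->
  forall h, P h.
Proof.
move=> eta_gt0 PD PN Pint.
suff Pnonpos : forall h, h <= 0 -> P h.
  move=> h; case: (Rle_dec h 0) => [/Pnonpos //|h_pos].
  rewrite -(Ropp_involutive h); apply/PN/Pnonpos; lra.
move=> h h_le0.
have [m m_large] := INR_unbounded (- h / eta).
have M_gt0 : 0 < INR m.+1 by apply: lt_0_INR; apply/ltP.
pose c := h / INR m.+1.
have c_mul : c * INR m.+1 = h by rewrite /c; field; lra.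
have c_in : - eta <= c <= 0.
  have : - h < INR m * eta.
    have := Rmult_lt_compat_r eta _ _ eta_gt0 m_large.
    by rewrite /Rdiv Rmult_assoc Rinv_l ?Rmult_1_r //; lra.
  rewrite S_INR in M_gt0 c_mul; split; nra.
have Pmult : forall k, P (INR k.+1 * c).
  elim=> [|k IHk]; first by rewrite Rmult_1_l; apply: Pint.
  by rewrite S_INR Rmult_plus_distr_r Rmult_1_l; apply: PD => //; apply: Pint.
by rewrite -c_mul Rmult_comm; apply: Pmult.
Qed.

Section IteratedDifferences.

Variable Y : lmodType rat.
Implicit Types (g : R -> Y) (hs : seq R).

Lemma Delta_seq_cons (c : R) l2 g x :
  Delta_seq (c :: l2) g x = (Delta_seq l2 g (Rplus x c) - Delta_seq l2 g x)%R.
Proof. by []. Qed.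

Lemma Delta_seq_slot0 l1 l2 g x : Delta_seq (l1 ++ 0 :: l2) g x = 0%R.
Proof.
elim: l1 x => [|c l1 IHl1] x; last by rewrite cat_cons Delta_seq_cons !IHl1 subrr.
by rewrite /= /Defs.Delta Rplus_0_r subrr.
Qed.

Lemma Delta_seq_slotD l1 l2 a b g x :
  Delta_seq (l1 ++ (a + b) :: l2) g x =
  (Delta_seq (l1 ++ a :: l2) g (Rplus x b) + Delta_seq (l1 ++ b :: l2) g x)%R.
Proof.
elim: l1 x => [|c l1 IHl1] x.
  rewrite /= /Defs.Delta.
  have -> : x + (a + b) = x + b + a by ring.
  by rewrite addrA subrK.
rewrite !cat_cons !Delta_seq_cons !IHl1.
have -> : x + c + b = x + b + c by ring.
by rewrite opprD addrACA.
Qed.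

(* The steps h, in a fixed slot, for which the iterated difference vanishes
   identically form an additive subgroup of R; by [subgroup_cover] it suffices
   to know them on a short interval [-eta, 0]. *)
Lemma slot_release l1 l2 g eta :
  0 < eta ->
  (forall h, - eta <= h <= 0 -> forall x, Delta_seq (l1 ++ h :: l2) g x = 0%R) ->
  forall h x, Delta_seq (l1 ++ h :: l2) g x = 0%R.
Proof.
move=> eta_gt0; apply: subgroup_cover => // [a b Ha Hb | a Ha] x.
  by rewrite Delta_seq_slotD Ha Hb addr0.
have := Delta_seq_slotD l1 l2 a (- a) g x.
by rewrite Rplus_opp_r Delta_seq_slot0 Ha add0r => <-.
Qed.

Lemma release_all_steps g (N : nat) eta :
  0 < eta ->
  (forall hs, size hs = N -> List.Forall (fun h => - eta <= h <= 0) hs ->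
     forall x, Delta_seq hs g x = 0%R) ->
  forall hs, size hs = N -> forall x, Delta_seq hs g x = 0%R.
Proof.
move=> eta_gt0 small_null.
suff released : forall l2 l1, size (l1 ++ l2) = N ->
    List.Forall (fun h => - eta <= h <= 0) l1 ->
    forall x, Delta_seq (l1 ++ l2) g x = 0%R.
  by move=> hs size_hs; apply: (released hs [::]).
elim=> [|h l2 IHl2] l1 size_l l1_in; first by rewrite cats0 in size_l *; exact: small_null.
move=> x; apply: (slot_release eta_gt0) => {x} h' h'_in x.
rewrite -cat_rcons; apply: IHl2; first by rewrite -size_l !size_cat size_rcons addSnnS.
by rewrite -cats1; apply/List.Forall_app; split; last constructor.
Qed.

End IteratedDifferences.

Definition affine (j : nat) (p q : R) : R := p + INR j * q.

Definition step_at (j : nat) (pq : R * R) : R := affine j pq.1 pq.2.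

(* The pairs (h_i, -h_i/(k+i+1)): the step at j = k+i+1 of the i-th pair is 0. *)
Fixpoint annihilating_pairs (k : nat) (hs : seq R) : seq (R * R) :=
  if hs is h :: hs' then (h, - h / INR k.+1) :: annihilating_pairs k.+1 hs' else [::].

(* Unfolding equation; plain simplification would also unfold INR k.+1. *)
Lemma annihilating_pairs_cons k h hs :
  annihilating_pairs k (h :: hs) = (h, - h / INR k.+1) :: annihilating_pairs k.+1 hs.
Proof. by []. Qed.

Lemma size_annihilating_pairs k hs : size (annihilating_pairs k hs) = size hs.
Proof. by elim: hs k => [|h hs IHhs] k //=; rewrite IHhs. Qed.

Lemma annihilating_pairs_at0 k hs : map (step_at 0) (annihilating_pairs k hs) = hs.
Proof.
elim: hs k => [|h hs IHhs] k //=.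
by rewrite IHhs /step_at /affine /= Rmult_0_l Rplus_0_r.
Qed.

Lemma annihilating_pairs_bounds eta k hs :
  List.Forall (fun h => - eta <= h <= 0) hs ->
  List.Forall (fun pq => 0 <= pq.2 <= eta) (annihilating_pairs k hs).
Proof.
elim: hs k => [|h hs IHhs] k hs_in; first by constructor.
inversion_clear hs_in as [|? ? h_in hs'_in].
rewrite annihilating_pairs_cons; constructor; last exact: IHhs.
have k1_ge1 : 1 <= INR k.+1 by rewrite S_INR; have := pos_INR k; lra.
have inv_in : 0 < / INR k.+1 <= 1.
  split; first by apply: Rinv_0_lt_compat; lra.
  by rewrite -Rinv_1; apply: Rinv_le_contravar; lra.
rewrite /Rdiv; cbn [snd]; move: inv_in; set i := / INR k.+1 => inv_in.
have := Rmult_le_pos (- h) (1 - i); split; nra.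
Qed.

Section MixedDifferences.

Context {Y : lmodType rat} {g : R -> Y} {N : nat}.

Definition mixed_diff (l : seq (R * R)) (x b : R) : Y :=
  (\sum_(j < N.+1)
     ((-1) ^+ (N - j) *: Delta_seq (map (step_at j) l) g (affine j x b)) *+ 'C(N, j))%R.

Lemma mixed_diff_nil x b : mixed_diff [::] x b = DeltaPow N b g x.
Proof. by []. Qed.

Lemma mixed_diff_cons p q l x b :
  mixed_diff ((p, q) :: l) x b =
  (mixed_diff l (Rplus x p) (Rplus b q) - mixed_diff l x b)%R.
Proof.
rewrite /mixed_diff -sumrB; apply: eq_bigr => j _ /=.
rewrite /Defs.Delta /step_at /affine /=.
have -> : x + INR j * b + (p + INR j * q) = x + p + INR j * (b + q) by ring.
by rewrite scalerBr mulrnBl.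
Qed.

(* In the j-th term of a mixed difference built on annihilating pairs, the
   step of the (j-k-1)-th pair is zero, so the term vanishes for k < j. *)
Lemma annihilating_pairs_zero k j hs x :
  (k < j <= k + size hs)%N ->
  Delta_seq (map (step_at j) (annihilating_pairs k hs)) g x = 0%R.
Proof.
elim: hs k x => [|h hs IHhs] k x.
  by rewrite addn0 => /andP[/leq_trans/[apply]]; rewrite ltnn.
rewrite annihilating_pairs_cons map_cons.
case/andP; rewrite leq_eqVlt => /orP[/eqP <- _ | k1_lt j_le].
  have -> : step_at k.+1 (h, - h / INR k.+1) = 0.
    by rewrite /step_at /affine; cbn [fst snd]; field; apply: not_0_INR.
  by rewrite Delta_seq_cons Rplus_0_r subrr.
by rewrite Delta_seq_cons !IHhs ?subrr // k1_lt addSnnS.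
Qed.

Context {delta : R}.
Hypothesis forward_null : forall x h, 0 < h < delta -> DeltaPow N h g x = 0%R.

(* Mixed differences with small nonnegative slopes vanish: iterate
   [mixed_diff_cons] down to the hypothesis on Delta_b^N g. *)
Lemma mixed_diff_vanish eta l x b :
  List.Forall (fun pq => 0 <= pq.2 <= eta) l ->
  0 < b -> b + INR (size l) * eta < delta ->
  mixed_diff l x b = 0%R.
Proof.
elim: l x b => [|[p q] l IHl] x b l_in b_gt0 b_small.
  rewrite /= Rmult_0_l Rplus_0_r in b_small.
  by rewrite mixed_diff_nil forward_null //; lra.
inversion_clear l_in as [|? ? q_in l'_in]; simpl in q_in.
rewrite [size _]/= S_INR Rmult_plus_distr_r Rmult_1_l in b_small.
by rewrite mixed_diff_cons !IHl ?subrr //; lra.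
Qed.

(* Only the j = 0 term of the mixed
   difference on annihilating pairs survives, and it is +-Delta_{hs} g x. *)
Lemma small_steps_null eta hs :
  0 < eta -> eta + INR N * eta < delta ->
  size hs = N -> List.Forall (fun h => - eta <= h <= 0) hs ->
  forall x, Delta_seq hs g x = 0%R.
Proof.
move=> eta_gt0 eta_small size_hs hs_in x.
have := mixed_diff_vanish x (annihilating_pairs_bounds 0 hs_in) eta_gt0.
rewrite size_annihilating_pairs size_hs => /(_ eta_small).
rewrite /mixed_diff big_ord_recl big1 => [|j _]; last first.
  by rewrite annihilating_pairs_zero ?scaler0 ?mul0rn // lift0 add0n size_hs /=.
rewrite annihilating_pairs_at0 /affine Rmult_0_l Rplus_0_r subn0 bin0 mulr1n addr0.
by move=> /eqP; rewrite scaler_eq0 signr_eq0 => /eqP.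
Qed.

End MixedDifferences.

(* The forward case of the theorem: with eta = delta / (N+2), both the base
   case [small_steps_null] and the release of the steps apply. *)
Lemma forward_steps_null (Y : lmodType rat) (g : R -> Y) (N : nat) (delta : R) :
  0 < delta ->
  (forall x h, 0 < h < delta -> DeltaPow N h g x = 0%R) ->
  forall hs, size hs = N -> forall x, Delta_seq hs g x = 0%R.
Proof.
move=> delta_gt0 forward_null.
have N2_gt0 : 0 < INR N.+2 by apply: lt_0_INR; apply/ltP.
pose eta := delta / INR N.+2.
have eta_mul : eta * INR N.+2 = delta by rewrite /eta; field; lra.
have eta_gt0 : 0 < eta by rewrite /eta; apply: Rdiv_lt_0_compat.
have eta_small : eta + INR N * eta < delta by rewrite !S_INR in eta_mul; nra.
apply: (release_all_steps eta_gt0) => hs.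
exact: (small_steps_null forward_null eta_gt0 eta_small).
Qed.

Definition mirror (Y : lmodType rat) (f : R -> Y) : R -> Y := fun x => f (- x).

Lemma DeltaPow_mirror (Y : lmodType rat) (f : R -> Y) s h x :
  DeltaPow s h (mirror f) x = DeltaPow s (- h) f (- x).
Proof.
apply: eq_bigr => k _; rewrite /mirror.
by have -> : - (x + INR k * h) = - x + INR k * - h by ring.
Qed.

Lemma Delta_seq_mirror (Y : lmodType rat) (f : R -> Y) hs x :
  Delta_seq hs (mirror f) x = Delta_seq (map Ropp hs) f (- x).
Proof.
elim: hs x => [|h hs IHhs] x //.
by rewrite map_cons !Delta_seq_cons !IHhs Ropp_plus_distr.
Qed.

Theorem theorem3 (Y : lmodType rat) (f : R -> Y) (s : nat) (delta : R)
  (hs1 : (1 <= s)%N) (hdelta : Rlt 0 delta) :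
  ((forall x h : R, Rlt (Ropp delta) h -> Rlt h 0 -> DeltaPow s h f x = 0%R) ->
     forall (x : R) (hs : seq R), size hs = s -> Delta_seq hs f x = 0%R)
  /\
  ((forall x h : R, Rlt 0 h -> Rlt h delta -> DeltaPow s h f x = 0%R) ->
     forall (x : R) (hs : seq R), size hs = s -> Delta_seq hs f x = 0%R).
Proof.
split=> [backward_null | forward_null] x hs size_hs.
- rewrite -[hs](mapK Ropp_involutive) -[x]Ropp_involutive -Delta_seq_mirror.
  have size_mirrored : size (map Ropp hs) = s by rewrite size_map.
  apply: (forward_steps_null hdelta _ size_mirrored) => y h h_in.
  by rewrite DeltaPow_mirror; apply: backward_null; lra.
- apply: (forward_steps_null hdelta _ size_hs) => y h [h_gt0 h_lt].
  exact: forward_null.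
Qed.
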